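(* Let $G=(V,E)$ be an undirected graph with positive edge weights, and let $p,v\in V$ be distinct. If a minimum $p,v$-cut $S$ with $v\in S$ (and $p\notin S$) satisfies $|E(\{p\},S)|>0.6\deg(p)$, then for all $v'\in (V\setminus S)\setminus\{p\}$ we have $\lambda_{p,v'}\le 0.8\,\lambda_{p,v}$.
   Context: $|E(A,B)|$ is the total weight of edges between node sets $A$ and $B$; $\deg(u)$ is the total weight of edges incident to $u$; $\lambda_{x,y}$ denotes the value (total weight of crossing edges) of a minimum $x,y$-cut in $G$. *)

From mathcomp Require Import all_boot all_order all_algebra.
Set Implicit Arguments. Unset Strict Implicit. Unset Printing Implicit Defensive.
Import Order.TTheory GRing.Theory Num.Theory.
Local Open Scope ring_scope.

(* A weighted undirected graph on a finite vertex type T is given by a weight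
   function w : T -> T -> R; {x,y} is an edge iff w x y > 0 (so all edge
   weights are positive), non-edges have weight 0. *)
Definition weighted_graph (R : realFieldType) (T : finType) (w : T -> T -> R) : Prop :=
  (forall x y, w x y = w y x) /\ (forall x, w x x = 0) /\ (forall x y, 0 <= w x y).

Definition Ew (R : realFieldType) (T : finType) (w : T -> T -> R) (A B : {set T}) : R :=
  \sum_(x in A) \sum_(y in B) w x y.

Definition degw (R : realFieldType) (T : finType) (w : T -> T -> R) (u : T) : R :=
  \sum_(y : T) w u y.

Definition cutval (R : realFieldType) (T : finType) (w : T -> T -> R) (S : {set T}) : R :=
  Ew w S (~: S).

(* S is an x,y-cut (written with y on the side S, as in the paper) *)
Definition is_cut (T : finType) (x y : T) (S : {set T}) : bool :=
  (y \in S) && (x \notin S).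

(* lambda_{x,y}: minimum value of an x,y-cut.  The fold starts at the value of
   the cut [set y], which is an x,y-cut whenever x != y. *)
Definition lambda (R : realFieldType) (T : finType) (w : T -> T -> R) (x y : T) : R :=
  \big[Num.min/cutval w [set y]]_(S : {set T} | is_cut x y S) cutval w S.

(** Put X := V \ (S ∪ {p}) and a := |E(p,S)|, b := |E(p,X)|, c := |E(S,X)|,
    so that λ_{p,v} = |E(S, V \ S)| = a + c and deg(p) = a + b.  The set X is
    a p,v'-cut of value b + c, and S ∪ X is a p,v-cut of value a + b, so the
    minimality of S gives c ≤ b.  The hypothesis 5a > 3(a + b) reads b < 2a/3,
    hence b + c ≤ 6b/5 < 4a/5 ≤ 4(a + c)/5. *)

From mathcomp Require Import all_boot all_order all_algebra.
From mathcomp Require Import lra.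
Set Implicit Arguments.
Unset Strict Implicit.
Import Order.TTheory GRing.Theory Num.Theory.
Local Open Scope ring_scope.

Section EdgeWeights.
Variables (R : realFieldType) (T : finType) (w : T -> T -> R).

Lemma EwUr (A B C : {set T}) : [disjoint B & C] ->
  Ew w A (B :|: C) = Ew w A B + Ew w A C.
Proof.
move=> dBC; rewrite /Ew -big_split; apply: eq_bigr => x _.
by rewrite -bigU //; apply: eq_bigl => y; rewrite !inE.
Qed.

Lemma EwUl (A B C : {set T}) : [disjoint A & B] ->
  Ew w (A :|: B) C = Ew w A C + Ew w B C.
Proof. by move=> dAB; rewrite /Ew -bigU //; apply: eq_bigl => y; rewrite !inE. Qed.

Lemma EwC (A B : {set T}) : (forall x y, w x y = w y x) -> Ew w A B = Ew w B A.
Proof.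
move=> w_sym; rewrite /Ew exchange_big.
by apply: eq_bigr => x _; apply: eq_bigr => y _.
Qed.

Lemma degwE (u : T) : degw w u = Ew w [set u] [set: T].
Proof. by rewrite /Ew big_set1; apply: eq_bigl => y; rewrite inE. Qed.

Lemma lambda_le_cutval (x y : T) (S : {set T}) :
  is_cut x y S -> lambda w x y <= cutval w S.
Proof. exact: (bigmin_le_cond _ (cutval w)). Qed.

End EdgeWeights.

Section CutAroundVertex.
Variables (R : realFieldType) (T : finType) (w : T -> T -> R).
Variables (p : T) (S : {set T}).
Hypothesis pNS : p \notin S.

Local Notation X := (~: S :\ p).

Lemma disjoint_rest : [disjoint S & X].
Proof. by apply/pred0P => z; rewrite !inE; case: (z \in S); rewrite ?andbF. Qed.

Lemma disjoint_rest_vertex : [disjoint X & [set p]].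
Proof. by rewrite disjoint_sym disjoints1 !inE eqxx. Qed.

Lemma setC_cut : ~: S = X :|: [set p].
Proof. by rewrite setUC setD1K // inE. Qed.

Lemma setC_rest : ~: X = S :|: [set p].
Proof. by rewrite setDE setCI !setCK. Qed.

Lemma setC_cutU_rest : ~: (S :|: X) = [set p].
Proof.
apply/setP => z; rewrite !inE.
by have [->|_] := eqVneq z p; rewrite ?(negbTE pNS) //; case: (z \in S).
Qed.

Lemma cutval_cut : cutval w S = Ew w S [set p] + Ew w S X.
Proof. by rewrite addrC -EwUr ?disjoint_rest_vertex // -setC_cut. Qed.

Lemma cutval_rest : cutval w X = Ew w X S + Ew w X [set p].
Proof. by rewrite -EwUr -?setC_rest // disjoint_sym disjoints1. Qed.

Lemma cutval_cutU_rest : cutval w (S :|: X) = Ew w S [set p] + Ew w X [set p].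
Proof. by rewrite /cutval setC_cutU_rest EwUl // disjoint_rest. Qed.

Lemma degw_split : w p p = 0 -> degw w p = Ew w [set p] S + Ew w [set p] X.
Proof.
move=> wpp0; rewrite degwE -(setUCr (S :|: X)) setC_cutU_rest.
rewrite EwUr; last by rewrite disjoint_sym disjoints1 -in_setC setC_cutU_rest set11.
by rewrite EwUr ?disjoint_rest // [Ew w [set p] [set p]]/Ew !big_set1 wpp0 addr0.
Qed.

End CutAroundVertex.

Theorem lemma4p5 (R : realFieldType) (T : finType) (w : T -> T -> R)
  (p v : T) (S : {set T}) :
  weighted_graph w -> p != v ->
  is_cut p v S -> cutval w S = lambda w p v ->
  Ew w [set p] S > (3%:R / 5%:R) * degw w p ->
  forall v' : T, v' \in (~: S) :\ p ->
    lambda w p v' <= (4%:R / 5%:R) * lambda w p v.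
Proof.
move=> [w_sym [w_loop _]] _ /andP[vS pNS] S_min heavy v' v'X.
set X := ~: S :\ p in v'X *.
have X_cut : lambda w p v' <= cutval w X.
  by apply: lambda_le_cutval; rewrite /is_cut v'X !inE eqxx.
have SX_cut : lambda w p v <= cutval w (S :|: X).
  apply: lambda_le_cutval.
  by rewrite /is_cut -in_setC setC_cutU_rest // set11 inE vS.
move: X_cut SX_cut heavy.
rewrite -S_min (cutval_cut w pNS) (cutval_rest w pNS) (cutval_cutU_rest w pNS).
rewrite (degw_split pNS (w_loop p)).
rewrite (EwC X S w_sym) (EwC [set p] S w_sym) (EwC X [set p] w_sym).
lra.
Qed.
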